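(* Let $(X,d)\in\mathfrak U$ (with $X\cap\operatorname{Sp}(X)=\varnothing$) and let $u,v,w$ be distinct internal nodes of the representing tree $T_X$ with labels $r_u,r_v,r_w\in\operatorname{Sp}(X)$. Then $v$ and $w$ are children of $u$ if and only if $$B_{r_u}=B_{r_v}\cup B_{r_w},$$ where $B_{r_u},B_{r_v},B_{r_w}$ are the balls in $\mathbf B_X$ of radii $r_u,r_v,r_w$ respectively.
   Context: $\operatorname{Sp}(X)=\{d(x,y):x\neq y\}$, $\operatorname{diam}X=\max d(x,y)$; $\mathfrak U$ is the class of finite ultrametric spaces $X$ with $|\operatorname{Sp}(X)|=|X|-1$. For $t\in X$, $B_r(t)=\{x:d(x,t)\le r\}$, $\operatorname{Sp}_t(X)=\{d(x,t):x\neq t\}$, and $\mathbf B_X=\{B_r(t):t\in X,\ r\in\operatorname{Sp}_t(X)\}$; for $X\in\mathfrak U$ and each $r\in\operatorname{Sp}(X)$ there is exactly one ball of radius $r$ in $\mathbf B_X$. The representing tree $T_X$ is the labelled rooted tree defined recursively: for $X=\{x\}$ it is a single node labelled $x$; for $|X|\ge2$ the root is labelled $\operatorname{diam}X$ and has one child for each class $X_i$ of the equivalence relation $x\sim y\iff d(x,y)<\operatorname{diam}X$, that child being labelled $x$ if $X_i=\{x\}$ (a leaf) and otherwise labelled $\operatorname{diam}X_i$ (an internal node) and carrying the recursively constructed tree for $X_i$. Children of a node are the adjacent nodes on the next level (farther from the root). *)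

From mathcomp Require Import all_boot all_order all_algebra.
From mathcomp Require Import reals.
Set Implicit Arguments. Unset Strict Implicit. Unset Printing Implicit Defensive.
Import Order.TTheory GRing.Theory Num.Theory.
Local Open Scope ring_scope.

Section UltraDefs.
Variables (R : realType) (X : finType) (d : X -> X -> R).

Definition ultrametric : Prop :=
  [/\ forall x y, 0 <= d x y,
      forall x y, d x y = 0 <-> x = y,
      forall x y, d x y = d y x &
      forall x y z, d x y <= Num.max (d x z) (d z y)].

Definition Sp : seq R :=
  undup [seq d p.1 p.2 | p <- enum [set: X * X] & p.1 != p.2].

Definition inU : Prop := size Sp = (#|X| - 1)%N.

(* diam S = max d(x,y), x,y in S (0 for empty / singletons) *)
Definition diam (S : {set X}) : R :=
  \big[Num.max/0]_(x in S) \big[Num.max/0]_(y in S) d x y.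

Definition ball (r : R) (t : X) : {set X} := [set x | d x t <= r].

Definition in_Sp_t (t : X) (r : R) : Prop := exists2 x, x != t & d x t = r.

Definition ballX (B : {set X}) (r : R) : Prop :=
  exists t, in_Sp_t t r /\ B = ball r t.

Definition is_class (S C : {set X}) : Prop :=
  exists2 x, x \in S & C = [set y in S | d x y < diam S].

(* nodes of the representing tree T_X, each node identified with the set of
   points (leaves) below it *)
Inductive rnode : {set X} -> Prop :=
| rnode_root : rnode [set: X]
| rnode_child S C : rnode S -> (1 < #|S|)%N -> is_class S C -> rnode C.

(* internal node (labelled diam S); leaves are the singleton nodes *)
Definition internal (S : {set X}) : Prop := rnode S /\ (1 < #|S|)%N.

Definition child (S C : {set X}) : Prop := internal S /\ is_class S C.

End UltraDefs.

From mathcomp Require Import all_boot all_order all_algebra.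
From mathcomp Require Import reals.
From mathcomp Require Import zify.
Set Implicit Arguments. Unset Strict Implicit. Unset Printing Implicit Defensive.
Import Order.TTheory GRing.Theory Num.Theory.
Local Open Scope ring_scope.

(* Every node S of T_X is the closed ball of radius diam S about any of its
   points, so the theorem reduces to a statement about nodes once the ball of
   B_X of radius diam S is known to be S itself.  This is where
   |Sp(X)| = |X| - 1 enters: adding a point p to a set creates at most one new
   distance, namely d(p,q) for a nearest point q, because d(p,z) > d(p,q)
   forces d(p,z) = d(q,z).  Hence a k-point subset realises at least k - 1
   distances, which excludes equilateral triangles and the two-distance
   four-point set that a ball B_r(t) with r = diam S and t outside S would
   produce.  Finally V, W are the children of U iff U = V ∪ W: a point of U in
   neither class would make an equilateral triangle of side diam U with their
   centres, while two proper subnodes covering U have diameters below diam U,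
   which forces each of them to be a class of U. *)

Section UltrametricTree.
Variables (R : realType) (X : finType) (d : X -> X -> R).
Hypothesis d_ultra : ultrametric d.

Lemma dist_ge0 x y : 0 <= d x y. Proof. by case: d_ultra. Qed.

Lemma distxx x : d x x = 0. Proof. by case: d_ultra => _ d0 _ _; apply/d0. Qed.

Lemma dist_gt0 x y : x != y -> 0 < d x y.
Proof.
rewrite lt_def dist_ge0 andbT; apply: contraNN => /eqP.
by case: d_ultra => _ d0 _ _ /d0 ->.
Qed.

Lemma distC x y : d x y = d y x. Proof. by case: d_ultra. Qed.

Lemma dist_lt_trans z x y c : d x z < c -> d z y < c -> d x y < c.
Proof.
case: d_ultra => _ _ _ dmax xz zy.
by apply: le_lt_trans (dmax x y z) _; rewrite gt_max xz zy.
Qed.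

Lemma dist_eq_of_lt x y z : d x z < d x y -> d z y = d x y.
Proof.
case: d_ultra => _ _ _ dmax xz_lt; apply/eqP; rewrite eq_le; apply/andP; split.
  by apply: le_trans (dmax z y x) _; rewrite ge_max distC ltW //=.
by have := dmax x y z; rewrite le_max leNgt xz_lt.
Qed.

Lemma le_diam (S : {set X}) x y : x \in S -> y \in S -> d x y <= diam d S.
Proof.
move=> xS yS; apply: le_trans (le_bigmax_cond _ _ xS).
exact: (le_bigmax_cond _ _ yS).
Qed.

Lemma diam_leP (S : {set X}) m :
  reflect (0 <= m /\ forall x y, x \in S -> y \in S -> d x y <= m)
          (diam d S <= m).
Proof.
apply: (iffP (bigmax_leP _ _ _ _)) => -[m0 Sm]; split=> //.
  by move=> x y xS yS; have /bigmax_leP[_ ->] := Sm x xS.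
by move=> x xS; apply/bigmax_leP; split=> // y yS; apply: Sm.
Qed.

Lemma diam_ltP (S : {set X}) m :
  reflect (0 < m /\ forall x y, x \in S -> y \in S -> d x y < m)
          (diam d S < m).
Proof.
apply: (iffP (bigmax_ltP _ _ _ _)) => -[m0 Sm]; split=> //.
  by move=> x y xS yS; have /bigmax_ltP[_ ->] := Sm x xS.
by move=> x xS; apply/bigmax_ltP; split=> // y yS; apply: Sm.
Qed.

Lemma diam_gt0 (S : {set X}) : (1 < #|S|)%N -> 0 < diam d S.
Proof.
case/card_gt1P => x [y [xS yS xy]].
exact: lt_le_trans (dist_gt0 xy) (le_diam xS yS).
Qed.

Lemma diam_attained (S : {set X}) : (1 < #|S|)%N ->
  exists a b, [/\ a \in S, b \in S, a != b & d a b = diam d S].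
Proof.
move=> S_gt1; have [x xS] : exists x, x \in S by apply/card_gt0P; apply: ltnW.
have [a aS diam_a] := @eq_bigmax _ _ X 0 x (mem S)
  (fun a => \big[Num.max/0]_(b in S) d a b) xS
  (fun a aS => le_trans (dist_ge0 a a) (le_bigmax_cond _ _ aS)).
have [b bS dab] := @eq_bigmax _ _ X 0 a (mem S) (d a) aS (fun b _ => dist_ge0 a b).
have diam_ab : d a b = diam d S by rewrite /diam diam_a dab.
exists a, b; split=> //; apply: contraTneq (diam_gt0 S_gt1) => ab.
by rewrite -diam_ab ab distxx ltxx.
Qed.

Lemma rnode_ball S t : rnode d S -> t \in S -> S = ball d (diam d S) t.
Proof.
move=> rS; elim: rS t => [|{}S C rS IH S_gt1 [x xS ->]] t.
  by move=> _; apply/setP => y; rewrite !inE le_diam ?inE.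
rewrite inE => /andP[tS xt].
have class_lt : diam d [set y in S | d x y < diam d S] < diam d S.
  apply/diam_ltP; split=> [|y z]; first exact: diam_gt0.
  by rewrite !inE => /andP[_ xy] /andP[_ xz]; apply: (dist_lt_trans (z := x)); rewrite // distC.
apply/setP => y; rewrite !inE; apply/idP/idP => [/andP[yS xy]|yt].
  by apply: le_diam; rewrite inE ?yS ?tS ?xy.
have {}yt : d y t < diam d S := le_lt_trans yt class_lt.
have yS : y \in S by rewrite (IH t tS) inE ltW.
by rewrite yS; apply: (dist_lt_trans (z := t)); rewrite // distC.
Qed.

Definition dists_in (S : {set X}) (L : seq R) :=
  forall y z, y \in S -> z \in S -> y != z -> d y z \in L.

Lemma dists_in_setD1 (S : {set X}) p q0 L : p \in S -> q0 \in S :\ p ->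
  dists_in (S :\ p) L -> exists m, dists_in S (m :: L).
Proof.
move=> pS q0Sp SpL; have [q qSp q_min] := arg_minP (d p) q0Sp.
have p_dists z : z \in S :\ p -> d p z \in d p q :: L.
  move=> zSp; rewrite in_cons; have [//|pqz /=] := eqVneq.
  have pq_lt : d p q < d p z by rewrite lt_def pqz q_min.
  have qz : q != z by apply: contraTneq pq_lt => ->; rewrite ltxx.
  by rewrite -(dist_eq_of_lt pq_lt) SpL.
exists (d p q) => y z yS zS yz.
have [yp|yp] := eqVneq y p; first by rewrite yp p_dists // !inE -yp eq_sym yz.
have [zp|zp] := eqVneq z p; first by rewrite zp distC p_dists // !inE yp.
by rewrite in_cons SpL ?orbT // !inE ?yp ?zp.
Qed.

Lemma dists_in_extend (S T : {set X}) L : T \subset S -> T != set0 -> dists_in T L ->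
  exists2 L', (size L' <= size L + #|S :\: T|)%N & dists_in S L'.
Proof.
move=> + /set0Pn[t tT] TL; have [n] := ubnP #|S :\: T|.
elim: n S => // n IH S ltST sTS.
have [/eqP|[p pST]] := set_0Vmem (S :\: T).
  rewrite setD_eq0 => sST; exists L; first exact: leq_addr.
  by move=> y z yS zS; apply: TL; apply: (subsetP sST).
have [pT pS] : p \notin T /\ p \in S by move: pST; rewrite inE => /andP.
have SpT : (S :\ p) :\: T = (S :\: T) :\ p by rewrite !setDDl setUC.
have sTSp : T \subset S :\ p.
  by apply/subsetP => y yT; rewrite !inE (subsetP sTS) // andbT; apply: contraNneq pT => <-.
have card_SpT : #|S :\: T| = #|(S :\ p) :\: T|.+1 by rewrite SpT (cardsD1 p) pST.
have ltn_SpT : (#|(S :\ p) :\: T| < n)%N by rewrite -ltnS -card_SpT.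
have [L' sizeL' SpL'] := IH (S :\ p) ltn_SpT sTSp.
have tSp : t \in S :\ p by rewrite (subsetP sTSp).
have [m SmL'] := dists_in_setD1 pS tSp SpL'.
by exists (m :: L'); rewrite //= card_SpT addnS ltnS.
Qed.

Hypothesis d_inU : inU d.

Lemma card_le_dists T L : dists_in T L -> (#|T| <= (size L).+1)%N.
Proof.
have [->|T0 TL] := eqVneq T set0; first by rewrite cards0.
have [L' sizeL' XL'] := dists_in_extend (subsetT T) T0 TL.
have Sp_sub : {subset Sp d <= L'}.
  move=> r; rewrite mem_undup => /mapP[[x y]]; rewrite mem_filter /= => /andP[xy _] ->.
  by apply: XL'; rewrite ?inE.
have := uniq_leq_size (undup_uniq _) Sp_sub.
rewrite -/(Sp d) d_inU -(cardsC T); move: sizeL'; rewrite setTD.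
have : (0 < #|T|)%N by rewrite card_gt0.
by move: #|T| #|~: T| (size L) (size L'); lia.
Qed.

Lemma no_equilateral x y z r : 0 < r ->
  d x y = r -> d y z = r -> d x z = r -> False.
Proof.
move=> r_gt0 dxy dyz dxz.
have neq u v : d u v = r -> u != v.
  by move=> duv; apply: contraTneq r_gt0 => uv; rewrite -duv uv distxx ltxx.
suff /card_le_dists : dists_in [set x; y; z] [:: r].
  by rewrite -!setUA !cardsU1 cards1 !inE !negb_or !neq.
move=> u v; rewrite -!setUA !inE.
by move=> /or3P[]/eqP-> /or3P[]/eqP->; rewrite ?eqxx // => _;
  rewrite ?(distC y x) ?(distC z x) ?(distC z y) ?dxy ?dyz ?dxz ?inE ?eqxx.
Qed.

Lemma mem_internal_of_dist U x t :
  internal d U -> x != t -> d x t = diam d U -> t \in U.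
Proof.
move=> [rU U_gt1] xt dxt; apply: contraT => tU.
have far y u : y \notin U -> u \in U -> diam d U < d y u.
  by move=> yU uU; move: yU; rewrite {1}(rnode_ball rU uU) inE -ltNge.
have xU : x \notin U.
  by apply/negP => xU; have := far t x tU xU; rewrite distC dxt ltxx.
have [a [b [aU bU ab dab]]] := diam_attained U_gt1.
have dbt : d b t = d a t by apply: dist_eq_of_lt; rewrite dab (distC a t) far.
have dax : d a x = d a t.
  by rewrite (distC a x) (distC a t); apply: dist_eq_of_lt; rewrite (distC t x) dxt far.
have dbx : d b x = d a t.
  by rewrite -dbt (distC b x) (distC b t); apply: dist_eq_of_lt; rewrite (distC t x) dxt far.
have ax : a != x by apply: contraNneq xU => <-.
have bx : b != x by apply: contraNneq xU => <-.
have at_ : a != t by apply: contraNneq tU => <-.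
have bt : b != t by apply: contraNneq tU => <-.
suff /card_le_dists : dists_in [set a; b; x; t] [:: diam d U; d a t].
  by rewrite -!setUA !cardsU1 cards1 !inE !negb_or ab ax at_ bx bt xt.
move=> u v; rewrite -!setUA !inE.
by move=> /or4P[]/eqP-> /or4P[]/eqP->; rewrite ?eqxx // => _;
  rewrite ?(distC b a) ?(distC x a) ?(distC t a) ?(distC x b) ?(distC t b) ?(distC t x)
    ?dab ?dax ?dbx ?dbt ?dxt ?eqxx ?orbT.
Qed.

Lemma internal_diam_inj U V :
  internal d U -> internal d V -> diam d U = diam d V -> U = V.
Proof.
move=> iU iV dUV; have [a [b [aV bV ab dab]]] := diam_attained iV.2.
have aU : a \in U.
  by apply: (mem_internal_of_dist (x := b)) => //; [rewrite eq_sym | rewrite distC dab].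
by rewrite (rnode_ball iU.1 aU) (rnode_ball iV.1 aV) dUV.
Qed.

Lemma ballX_internal B S : internal d S -> ballX d B (diam d S) -> B = S.
Proof.
move=> iS [t [[x xt dxt] ->]].
by rewrite -(rnode_ball iS.1 (mem_internal_of_dist iS xt dxt)).
Qed.

Lemma diam_lt_internal U V :
  internal d U -> internal d V -> V \subset U -> U != V -> diam d V < diam d U.
Proof.
move=> iU iV sVU UV; rewrite lt_neqAle; apply/andP; split.
  by apply: contra UV => /eqP dVU; apply/eqP/internal_diam_inj.
apply/diam_leP; split=> [|x y xV yV]; first exact/ltW/diam_gt0/iU.2.
by apply: le_diam; apply: (subsetP sVU).
Qed.

Lemma is_class_setUl U V W : internal d U -> internal d V -> internal d W ->
  U != V -> U != W -> U = V :|: W -> is_class d U V.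
Proof.
move=> iU iV iW UV UW defU.
have sVU : V \subset U by rewrite defU subsetUl.
have sWU : W \subset U by rewrite defU subsetUr.
have ltVU := diam_lt_internal iU iV sVU UV.
have ltWU := diam_lt_internal iU iW sWU UW.
have [x xV] : exists x, x \in V by apply/card_gt0P/ltnW/iV.2.
exists x; first exact: (subsetP sVU).
apply/setP => y; rewrite inE; apply/idP/idP => [yV|/andP[yU xy]].
  by rewrite (subsetP sVU) //=; apply: (le_lt_trans _ ltVU); apply: le_diam.
apply: contraT => yV; have yW : y \in W by move: yU; rewrite defU inE (negbTE yV).
have x_near u : u \in U -> d x u < diam d U.
  rewrite {1}defU inE => /orP[uV|uW]; first by apply: (le_lt_trans _ ltVU); apply: le_diam.
  by apply: (dist_lt_trans xy); apply: (le_lt_trans _ ltWU); apply: le_diam.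
have [a [b [aU bU _ dab]]] := diam_attained iU.2.
have : d a b < diam d U.
  by apply: (dist_lt_trans (z := x)); [rewrite distC|]; apply: x_near.
by rewrite dab ltxx.
Qed.

Lemma setU_children U V W : child d U V -> child d U W -> V != W -> U = V :|: W.
Proof.
move=> [iU [x xU defV]] [_ [y yU defW]] VW.
apply/eqP; rewrite eqEsubset subUset defV defW; apply/andP; split; last first.
  by apply/andP; split; apply/subsetP => z; rewrite inE => /andP[].
apply/subsetP => z zU; rewrite !inE zU /=; apply: contraT; rewrite negb_or -!leNgt.
move=> /andP[dxz dyz].
have dxy : diam d U <= d x y.
  rewrite leNgt; apply: contra VW => xy; rewrite defV defW; apply/eqP/setP => w.
  rewrite !inE; case: (w \in U) => //=; apply/idP/idP => [xw|yw].
    by apply: (dist_lt_trans (z := x)); rewrite // distC.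
  exact: (dist_lt_trans (z := y)).
have eq_diam u v : u \in U -> v \in U -> diam d U <= d u v -> d u v = diam d U.
  by move=> uU vU le_uv; apply/eqP; rewrite eq_le le_uv le_diam.
by case: (no_equilateral (diam_gt0 iU.2) (eq_diam _ _ xU yU dxy) (eq_diam _ _ yU zU dyz)
  (eq_diam _ _ xU zU dxz)).
Qed.
End UltrametricTree.

Theorem lemma23 (R : realType) (X : finType) (d : X -> X -> R) :
  ultrametric d -> inU d ->
  forall U V W : {set X},
    internal d U -> internal d V -> internal d W ->
    U != V -> U != W -> V != W ->
  forall Bu Bv Bw : {set X},
    ballX d Bu (diam d U) -> ballX d Bv (diam d V) -> ballX d Bw (diam d W) ->
    (child d U V /\ child d U W <-> Bu = Bv :|: Bw).
Proof.
move=> d_ultra d_inU U V W iU iV iW UV UW VW Bu Bv Bw BuU BvV BwW.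
rewrite (ballX_internal d_ultra d_inU iU BuU) (ballX_internal d_ultra d_inU iV BvV).
rewrite (ballX_internal d_ultra d_inU iW BwW).
split=> [[cV cW]|defU]; first exact: (setU_children d_ultra d_inU cV cW VW).
split; split=> //; first exact: (is_class_setUl d_ultra d_inU iU iV iW).
by apply: (is_class_setUl d_ultra d_inU iU iW iV); rewrite // setUC.
Qed.
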